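(* Consider the three-dimensional real Lie algebra $\mathfrak{g}$ spanned by the vector fields $$\Pi_1=x\frac{\partial}{\partial x}+y\frac{\partial}{\partial y},\qquad \Pi_2=-x\frac{\partial}{\partial x}+x\frac{\partial}{\partial y},\qquad \Pi_3=x^2\frac{\partial}{\partial x}+xy\frac{\partial}{\partial y},$$ which is the Lie algebra of point symmetries of the equation $y_{xx}=-\frac{y_x^2}{x+y}-\frac{2yy_x}{x(x+y)}-\frac{y^2}{x^2(x+y)}$. An optimal system of one-dimensional subalgebras of $\mathfrak{g}$ is given by the subalgebras generated by $$\Pi_1+\Pi_2,\qquad \Pi_1+b_2\Pi_3,\qquad a_1\Pi_1+a_2\Pi_2\ \ (a_1\neq a_2),\qquad a_1\Pi_1+a_1\Pi_2+\Pi_3,\qquad a_1\Pi_1+a_2\Pi_2+\Pi_3\ \ (a_1\neq 1),$$ where $a_1,a_2,b_2$ are real parameters.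
   Context: The Lie brackets of $\mathfrak{g}$ are $[\Pi_1,\Pi_2]=0$, $[\Pi_1,\Pi_3]=\Pi_3$, $[\Pi_2,\Pi_3]=-\Pi_3$. An optimal system of one-dimensional subalgebras is a list of elements of $\mathfrak{g}$ such that every nonzero element $G=a_1\Pi_1+a_2\Pi_2+a_3\Pi_3$ of $\mathfrak{g}$ is mapped, up to a nonzero scalar multiple, to an element of the list by some composition of adjoint maps $\mathrm{Ad}(\exp(\lambda\Pi))G=\sum_{n\ge0}\frac{\lambda^n}{n!}(\mathrm{ad}\,\Pi)^nG$, $\Pi\in\mathfrak{g}$, $\lambda\in\mathbb{R}$. *)

From HB Require Import structures.
From mathcomp Require Import all_boot all_order all_algebra.
From mathcomp Require Import all_classical all_reals all_analysis.
Set Implicit Arguments. Unset Strict Implicit. Unset Printing Implicit Defensive.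
Import Order.TTheory GRing.Theory Num.Theory.
Import numFieldNormedType.Exports.
Local Open Scope classical_set_scope.
Local Open Scope ring_scope.

(* The Lie algebra g is R^3 with basis Pi1, Pi2, Pi3 (coordinates 0,1,2). *)
Definition gvec (R : realType) (a1 a2 a3 : R) : 'rV[R]_3 :=
  \row_(i < 3) (if val i == 0%N then a1 else if val i == 1%N then a2 else a3).

Definition Pi1 (R : realType) : 'rV[R]_3 := gvec 1 0 0.
Definition Pi2 (R : realType) : 'rV[R]_3 := gvec 0 1 0.
Definition Pi3 (R : realType) : 'rV[R]_3 := gvec 0 0 1.

Definition brk (R : realType) (i j : 'I_3) : 'rV[R]_3 :=
  match val i, val j with
  | 0%N, 2%N => Pi3 R
  | 2%N, 0%N => - Pi3 R
  | 1%N, 2%N => - Pi3 R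
  | 2%N, 1%N => Pi3 R
  | _, _ => 0
  end.

Definition lieb (R : realType) (u v : 'rV[R]_3) : 'rV[R]_3 :=
  \sum_(i < 3) \sum_(j < 3) (u 0 i * v 0 j) *: brk R i j.

Definition adpow (R : realType) (P : 'rV[R]_3) (n : nat) (G : 'rV[R]_3) :=
  iter n (lieb P) G.

(* Ad(exp(lam P)) G = H, i.e. the series sum_n lam^n/n! (ad P)^n G
   converges (coordinatewise) to H. *)
Definition AdExp (R : realType) (P : 'rV[R]_3) (lam : R) (G H : 'rV[R]_3) :=
  forall j : 'I_3,
    ((fun N : nat => \sum_(n < N) (lam ^+ n / (n`!)%:R) * (adpow P n G) 0 j)
       : nat -> R) @ \oo --> H 0 j.

Inductive Ad_reach (R : realType) : 'rV[R]_3 -> 'rV[R]_3 -> Prop :=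
  | Ad_refl G : Ad_reach G G
  | Ad_step P lam G H K : AdExp P lam G H -> Ad_reach H K -> Ad_reach G K.

Definition in_list (R : realType) (L : 'rV[R]_3) : Prop :=
  L = Pi1 R + Pi2 R
  \/ (exists b2 : R, L = Pi1 R + b2 *: Pi3 R)
  \/ (exists a1 a2 : R, a1 != a2 /\ L = a1 *: Pi1 R + a2 *: Pi2 R)
  \/ (exists a1 : R, L = a1 *: Pi1 R + a1 *: Pi2 R + Pi3 R)
  \/ (exists a1 a2 : R, a1 != 1 /\ L = a1 *: Pi1 R + a2 *: Pi2 R + Pi3 R).

From HB Require Import structures.
From mathcomp Require Import all_boot all_order all_algebra.
From mathcomp Require Import all_classical all_reals all_analysis.
Import Order.TTheory GRing.Theory Num.Theory.
Import numFieldNormedType.Exports.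
From mathcomp Require Import ring.
Local Open Scope ring_scope.
Set Implicit Arguments. Unset Strict Implicit.

(* Write G = a Pi1 + b Pi2 + c Pi3.  Since [Pi3, G] = (b - a) Pi3 and ad Pi3 is
   nilpotent, Ad(exp(lam Pi3)) G = G + lam (b - a) Pi3; for a <> b a suitable lam
   removes the Pi3 component, leaving a Pi1 + b Pi2.  For a = b, G is already a
   multiple of Pi1 + Pi2 (c = 0) or of a Pi1 + a Pi2 + Pi3 (c <> 0). *)

Section AdjointSeries.
Variable R : realType.
Implicit Types (P G H : 'rV[R]_3) (lam : R).

Lemma lieb0r P : lieb P 0 = 0.
Proof.
by rewrite /lieb big1 // => i _; rewrite big1 // => j _; rewrite mxE mulr0 scale0r.
Qed.

Lemma adpow0 P n : adpow P n 0 = 0.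
Proof. by elim: n => //= n IHn; rewrite IHn lieb0r. Qed.

Lemma AdExp_ad_nilpotent P lam G :
  lieb P (lieb P G) = 0 -> AdExp P lam G (G + lam *: lieb P G).
Proof.
move=> adP2 j; apply: cvg_near_cst; exists 2%N => // [[|[|n]]] //= _.
rewrite 2!big_ord_recl big1 ?addr0; last first.
  move=> i _; rewrite /adpow /bump /= add0n -!iterS !iterSr adP2.
  by rewrite -/(adpow P i 0) adpow0 mxE mulr0.
by rewrite /= !mxE expr0 expr1 !divr1 mul1r.
Qed.

Lemma Ad_reach_AdExp P lam G H : AdExp P lam G H -> Ad_reach G H.
Proof. by move=> GH; apply: Ad_step GH (Ad_refl _). Qed.

End AdjointSeries.

Section Coordinates.
Variable R : realType.
Implicit Types G : 'rV[R]_3.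

Lemma row3E G : G = G 0 0 *: Pi1 R + G 0 1 *: Pi2 R + G 0 2 *: Pi3 R.
Proof.
apply/rowP => -[[|[|[|//]]] Hk]; rewrite !mxE /=;
  rewrite ?mulr0 ?mulr1 ?add0r ?addr0; by congr (G 0 _); apply: val_inj.
Qed.

Lemma lieb_Pi3 G : lieb (Pi3 R) G = (G 0 1 - G 0 0) *: Pi3 R.
Proof.
apply/rowP => k; rewrite /lieb !summxE !big_ord_recr !big_ord0 /=.
rewrite /brk /Pi3 /gvec ?mxE /=.
rewrite (_ : widen_ord _ (widen_ord _ ord_max) = 0 :> 'I_3); last exact: val_inj.
rewrite (_ : widen_ord _ ord_max = 1 :> 'I_3); last exact: val_inj.
rewrite (_ : ord_max = 2 :> 'I_3); last exact: val_inj.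
by case: k => [[|[|[|]]] //= _]; rewrite ?mxE /=; ring.
Qed.

Lemma ad_Pi3_nilpotent G : lieb (Pi3 R) (lieb (Pi3 R) G) = 0.
Proof. by rewrite [LHS]lieb_Pi3 lieb_Pi3 !mxE /= subrr scale0r. Qed.

Lemma Ad_reach_drop_Pi3 G :
  G 0 0 != G 0 1 -> Ad_reach G (G 0 0 *: Pi1 R + G 0 1 *: Pi2 R).
Proof.
move=> neq_ab; set lam := G 0 2 / (G 0 0 - G 0 1).
have GH := AdExp_ad_nilpotent (lam := lam) (ad_Pi3_nilpotent G).
suff <- : G + lam *: lieb (Pi3 R) G = G 0 0 *: Pi1 R + G 0 1 *: Pi2 R.
  exact: Ad_reach_AdExp GH.
rewrite lieb_Pi3 scalerA {1}(row3E G) -addrA -scalerDl.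
suff -> : G 0 2 + lam * (G 0 1 - G 0 0) = 0 by rewrite scale0r addr0.
by rewrite /lam; field; rewrite subr_eq0.
Qed.

End Coordinates.

Theorem proposition2 (R : realType) (G : 'rV[R]_3) :
  G != 0 ->
  exists (H : 'rV[R]_3) (c : R) (L : 'rV[R]_3),
    Ad_reach G H /\ c != 0 /\ c *: H = L /\ in_list L.
Proof.
move=> G0; have GE := row3E G.
set a := G 0 0 in GE *; set b := G 0 1 in GE *; set c := G 0 2 in GE *.
have [ab|nab] := eqVneq a b; last first.
  exists (a *: Pi1 R + b *: Pi2 R), 1, (a *: Pi1 R + b *: Pi2 R).
  split; first exact: Ad_reach_drop_Pi3.
  rewrite scale1r oner_neq0; split=> //; split=> //.
  by right; right; left; exists a, b.
have [c0|nc0] := eqVneq c 0.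
  have a0 : a != 0.
    by apply: contraNneq G0 => a0; rewrite GE -ab a0 c0 !scale0r !addr0.
  exists G, a^-1, (Pi1 R + Pi2 R); split; first exact: Ad_refl.
  rewrite invr_eq0 a0; split=> //; split; last by left.
  by rewrite {1}GE -ab c0 scale0r addr0 -scalerDr scalerA mulVf // scale1r.
exists G, c^-1, ((a / c) *: Pi1 R + (a / c) *: Pi2 R + Pi3 R).
split; first exact: Ad_refl.
rewrite invr_eq0 nc0; split=> //; split.
  by rewrite {1}GE -ab !scalerDr !scalerA mulVf // scale1r mulrC.
by right; right; right; left; exists (a / c).
Qed.
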